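(* If $G$ is a graph with no component of order exactly $2$, then $\gamma(S_2(G))=\gamma_{\rm cer}(S_2(G))$.
   Context: All graphs are finite and simple. The $2$-subdivision $S_2(G)$ of $G$ is obtained from $G$ by replacing each edge $e=uv$ by a path $u,u_e,v_e,v$, where $u_e,v_e$ are two new vertices. A set $D\subseteq V_G$ is a dominating set of $G$ if every vertex of $V_G-D$ has a neighbor in $D$; $\gamma(G)$ is the minimum cardinality of a dominating set. A set $D\subseteq V_G$ is a certified dominating set of $G$ if $D$ is a dominating set of $G$ and every vertex of $D$ has either zero or at least two neighbors in $V_G-D$; $\gamma_{\rm cer}(G)$ is the minimum cardinality of a certified dominating set. *)

From mathcomp Require Import all_boot.
Set Implicit Arguments. Unset Strict Implicit. Unset Printing Implicit Defensive.

Definition simple_graph (T : finType) (e : rel T) : Prop :=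
  symmetric e /\ irreflexive e.

Definition nbhd (T : finType) (e : rel T) (x : T) : {set T} := [set y | e x y].

Definition dominating (T : finType) (e : rel T) (D : {set T}) : bool :=
  [forall x, (x \notin D) ==> [exists y in D, e x y]].

Definition certified_dominating (T : finType) (e : rel T) (D : {set T}) : bool :=
  dominating e D &&
  [forall x in D, (#|nbhd e x :\: D| == 0) || (2 <= #|nbhd e x :\: D|)].

(* gamma(G): minimum cardinality of a dominating set (V itself is one). *)
Definition gamma (T : finType) (e : rel T) : nat :=
  \big[minn/#|T|]_(D : {set T} | dominating e D) #|D|.

Definition gamma_cer (T : finType) (e : rel T) : nat :=
  \big[minn/#|T|]_(D : {set T} | certified_dominating e D) #|D|.

(* For an edge e = uv, the subdivision vertex u_e
   (adjacent to u) is represented by the ordered pair (u,v) with e u v,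
   and v_e by (v,u). *)
Definition sub2_vertex (T : finType) (e : rel T) : finType :=
  (T + {p : T * T | e p.1 p.2})%type.

Definition sub2_adj (T : finType) (e : rel T) : rel (sub2_vertex e) :=
  fun a b =>
    match a, b with
    | inl x, inl y => false
    | inl x, inr p => (val p).1 == x
    | inr p, inl y => (val p).1 == y
    | inr p, inr q => ((val q).1 == (val p).2) && ((val q).2 == (val p).1)
    end.

Definition no_component_of_order2 (T : finType) (e : rel T) : Prop :=
  forall x : T, #|[set y | connect e x y]| != 2.

(* Any dominating set D of S_2(G) can be made certified without growing.  If
   x in D has exactly one neighbour outside D, then x can be exchanged for a
   nearby vertex z so that the result still dominates and either z was already
   in D (the set shrinks) or z is "preferred" while x is not.  The preferred
   vertices are the original vertices that are not leaves and the subdivision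
   vertices next to leaves, so every exchange decreases |D| + |D \ P|.  The
   only configuration without an exchange is an edge between two leaves,
   i.e. a component of order 2. *)

From mathcomp Require Import all_boot all_order zify.
Import Order.TTheory.
Set Implicit Arguments. Unset Strict Implicit. Unset Printing Implicit Defensive.

Lemma bigminn_le_cond (I : finType) (P : pred I) (F : I -> nat) a i :
  P i -> \big[minn/a]_(j | P j) F j <= F i.
Proof. by rewrite -minEnat; exact: (@bigmin_le_cond _ nat). Qed.

Lemma bigminn_le_id (I : finType) (P : pred I) (F : I -> nat) a :
  \big[minn/a]_(j | P j) F j <= a.
Proof. by rewrite -minEnat; exact: (@bigmin_le_id _ nat). Qed.

Lemma leq_bigminn (I : finType) (P : pred I) (F : I -> nat) a c :
  c <= a -> (forall i, P i -> c <= F i) -> c <= \big[minn/a]_(j | P j) F j.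
Proof. by rewrite -minEnat; exact: (@le_bigmin _ nat). Qed.

Lemma card1_eq (V : finType) (A : {set V}) a b :
  #|A| = 1 -> a \in A -> b \in A -> a = b.
Proof.
move=> A1 aA bA; have /card_le1_eqP A_eq : #|A| <= 1 by rewrite A1.
exact: A_eq.
Qed.

Lemma card_connect_isolated_edge (T : finType) (e : rel T) a b :
  symmetric e -> irreflexive e -> e a b ->
  (forall w, e a w -> w = b) -> (forall w, e b w -> w = a) ->
  #|[set y | connect e a y]| = 2.
Proof.
move=> e_sym e_irr eab na nb.
have ab : a != b by apply: contraTneq eab => ->; rewrite e_irr.
have cl : closed e [set a; b].
  apply: (intro_closed (sym_connect_sym e_sym)) => x y exy; rewrite !inE.
  case/orP=> /eqP xE; rewrite xE in exy.
    by rewrite (na _ exy) eqxx orbT.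
  by rewrite (nb _ exy) eqxx.
suff -> : [set y | connect e a y] = [set a; b] by rewrite cards2 ab.
apply/setP => y; rewrite inE; apply/idP/idP => [/(closed_connect cl) <-|].
  by rewrite !inE eqxx.
by rewrite !inE => /orP[] /eqP ->; [exact: connect0 | exact: connect1].
Qed.

Section Exchange.

Variables (V : finType) (r : rel V).
Implicit Types (D P : {set V}) (x y z : V).

Lemma dominating_swap D x z :
  dominating r D ->
  (forall y, y \notin z |: (D :\ x) -> (y == x) || r y x ->
     exists2 w, w \in z |: (D :\ x) & r y w) ->
  dominating r (z |: (D :\ x)).
Proof.
move=> /forallP domD near_x; apply/forallP => y; apply/implyP => yD'.
apply/exists_inP.
case: (boolP ((y == x) || r y x)) => [/near_x|/norP[yx nryx]]; first exact.
have yD : y \notin D by apply: contra yD' => yD; rewrite !inE yx yD orbT.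
have /exists_inP[w wD ryw] := implyP (domD y) yD.
exists w => //; rewrite !inE wD andbT; apply/orP; right.
by apply: contraNneq nryx => <-.
Qed.

Variable P : {set V}.

Definition improving_swap D x z : Prop :=
  [/\ x \in D, z != x, (z \in D) || ((x \notin P) && (z \in P))
    & dominating r (z |: (D :\ x))].

Definition has_improving_swap D : Prop := exists x z, improving_swap D x z.

Lemma improving_swap_measure D x z : improving_swap D x z ->
  #|z |: (D :\ x)| <= #|D| /\
  #|z |: (D :\ x)| + #|(z |: (D :\ x)) :\: P| < #|D| + #|D :\: P|.
Proof.
case=> xD zx zDP _; rewrite (cardsD1 x D) xD cardsU1.
case zD: (z \in D).
  have zDx : z \in D :\ x by rewrite !inE zD zx.
  suff /subset_leq_card : (z |: (D :\ x)) :\: P \subset D :\: P by rewrite zDx; lia.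
  by apply: setSD; rewrite subUset sub1set zD subD1set.
move: zDP; rewrite zD /= => /andP[xP zP].
have -> : (z |: (D :\ x)) :\: P = (D :\: P) :\ x.
  apply/setP => w; rewrite !inE.
  case: (eqVneq w z) => [->|_]; first by rewrite zP /= andbF.
  by case: (w \in P); case: (w != x).
have zDx : z \notin D :\ x by rewrite inE zD andbF.
rewrite zDx [#|D :\: P|](cardsD1 x) !inE xD xP /=; lia.
Qed.

Lemma certified_dominating_below :
  (forall D x, dominating r D -> x \in D -> #|nbhd r x :\: D| = 1 ->
     has_improving_swap D) ->
  forall D, dominating r D ->
  exists2 D', certified_dominating r D' & #|D'| <= #|D|.
Proof.
move=> swap D; have [n] := ubnP (#|D| + #|D :\: P|).
elim: n D => // n IH D lt_m domD.
have [cD | ncD] := boolP (certified_dominating r D); first by exists D.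
have [x xD x1] : exists2 x, x \in D & #|nbhd r x :\: D| = 1.
  move: ncD; rewrite /certified_dominating domD => /forall_inPn[x xD].
  by rewrite negb_or -leqNgt => /andP[x0 x1]; exists x => //; lia.
have [x' [z sw]] := swap D x domD xD x1.
have [le_card lt_m'] := improving_swap_measure sw.
have [D' cD' le_D'] := IH _ (leq_trans lt_m' lt_m) (let: And4 _ _ _ d := sw in d).
by exists D' => //; apply: leq_trans le_card.
Qed.

End Exchange.

Lemma gamma_eq_gamma_cer (V : finType) (r : rel V) :
  (forall D, dominating r D ->
     exists2 D', certified_dominating r D' & #|D'| <= #|D|) ->
  gamma r = gamma_cer r.
Proof.
move=> certify; apply/eqP; rewrite eqn_leq; apply/andP; split.
  apply: leq_bigminn => [|D /andP[domD _]]; first exact: bigminn_le_id.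
  exact: bigminn_le_cond.
apply: leq_bigminn => [|D /certify[D' cD' le_D']]; first exact: bigminn_le_id.
exact: leq_trans (bigminn_le_cond _ _ cD') le_D'.
Qed.

Section TwoSubdivision.

Variables (T : finType) (e : rel T).
Hypotheses (e_sym : symmetric e) (e_irr : irreflexive e).

Local Notation arc := {p : T * T | e p.1 p.2}.
Local Notation adj := (@sub2_adj T e).
Implicit Types (D : {set sub2_vertex e}) (q : arc).

Fact rev_arc_subproof q : e (val q).2 (val q).1.
Proof. by rewrite e_sym (valP q). Qed.

Definition rev_arc q : arc := Sub ((val q).2, (val q).1) (rev_arc_subproof q).

Lemma rev_arcK : involutive rev_arc.
Proof. by move=> q; apply: val_inj; case: q => [[]]. Qed.

Lemma rev_arc_neq q : rev_arc q != q.
Proof.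
case: q => [[a b] eab]; apply/eqP => /(congr1 val) [ba _].
by move: eab; rewrite ba e_irr.
Qed.

Lemma adj_inr y q : adj y (inr q) = (y == inl (val q).1) || (y == inr (rev_arc q)).
Proof.
case: y => [u|q'] /=.
  by apply/eqP/orP => [<-|[/eqP[->]|/eqP//]]; first by left.
rewrite -[inr q' == _]/(q' == rev_arc q) -val_eqE; case: q' => [[c d] _] /=.
by rewrite xpair_eqE andbC eq_sym [d == _]eq_sym.
Qed.

Lemma adj_sym : symmetric adj.
Proof.
case=> [u|q] [v|q'] //=.
by rewrite andbC (eq_sym (sval q).1) (eq_sym (sval q).2).
Qed.

(* Degree 1 in S_2(G), which is the same as degree 1 in G. *)
Definition leaf (u : T) : bool := #|nbhd adj (inl u)| == 1.

Definition preferred : {set sub2_vertex e} :=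
  [set x | match x with inl u => ~~ leaf u | inr q => leaf (val q).1 end].

Lemma leaf_adj_eq u y y' : leaf u -> adj (inl u) y -> adj (inl u) y' -> y = y'.
Proof. by move=> /eqP u1 uy uy'; apply: (card1_eq u1); rewrite inE. Qed.

Lemma leaf_nbr_eq u v w : leaf u -> e u v -> e u w -> v = w.
Proof.
move=> lu euv euw.
have := @leaf_adj_eq u (inr (Sub (u, v) euv)) (inr (Sub (u, w) euw)) lu.
by rewrite /= eqxx => /(_ isT isT) [].
Qed.

Lemma leaf_arc_nonleaf q :
  no_component_of_order2 e -> leaf (val q).1 -> ~~ leaf (val q).2.
Proof.
move=> no2 l1; apply/negP => l2; have := no2 (val q).1.
rewrite (card_connect_isolated_edge e_sym e_irr (valP q)) // => w ew.
  exact: leaf_nbr_eq l1 ew (valP q).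
exact: leaf_nbr_eq l2 ew (rev_arc_subproof q).
Qed.

Lemma dominating_swap_leaf D q : leaf (val q).1 -> dominating adj D ->
  dominating adj (inr q |: (D :\ inl (val q).1)).
Proof.
move=> l1 domD; apply: dominating_swap => // y yD' /orP[/eqP ->|].
  by exists (inr q); rewrite ?setU11 //= eqxx.
rewrite adj_sym => uy; have yq : y = inr q by apply: (leaf_adj_eq l1 uy) => /=.
by move: yD'; rewrite yq setU11.
Qed.

Lemma dominating_swap_arc D q z : dominating adj D ->
  inl (val q).1 \in z |: (D :\ inr q) ->
  (inr (rev_arc q) \in z |: (D :\ inr q)) || adj (inr (rev_arc q)) z ->
  dominating adj (z |: (D :\ inr q)).
Proof.
move=> domD q1D' revD'; apply: dominating_swap => // y yD' /orP[/eqP ->|].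
  by exists (inl (val q).1) => //=.
rewrite adj_inr => /orP[] /eqP yE; rewrite yE in yD' *; first by rewrite q1D' in yD'.
by exists z; rewrite ?setU11 //; move: revD'; rewrite (negbTE yD').
Qed.

Lemma dominating_swap_arc_end D q : dominating adj D -> inl (val q).1 \in D ->
  dominating adj (inl (val q).2 |: (D :\ inr q)).
Proof.
move=> domD q1D; apply: dominating_swap_arc => //; rewrite !inE.
  by apply/orP; right; apply/andP; split.
by rewrite /= eqxx !orbT.
Qed.

Lemma dominating_swap_arc_rev D q : dominating adj D -> inl (val q).1 \in D ->
  dominating adj (inr (rev_arc q) |: (D :\ inr q)).
Proof.
by move=> domD q1D; apply: dominating_swap_arc; rewrite // !inE ?q1D ?eqxx ?orbT.
Qed.

Lemma dominating_swap_arc_start D q : dominating adj D -> inr (rev_arc q) \in D ->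
  dominating adj (inl (val q).1 |: (D :\ inr q)).
Proof.
move=> domD revD; apply: dominating_swap_arc; rewrite // !inE ?eqxx //.
by rewrite revD rev_arc_neq orbT.
Qed.

Local Notation has_swap := (has_improving_swap adj preferred).

Lemma improving_swap_arc q D : dominating adj D ->
  inl (val q).1 \in D -> inr q \in D -> has_swap D.
Proof.
move=> domD q1D qD; case l1: (leaf (val q).1).
  exists (inl (val q).1), (inr q); split => //; first by rewrite qD.
  exact: dominating_swap_leaf.
have qP : inr q \notin preferred by rewrite inE /= l1.
case l2: (leaf (val q).2).
  exists (inr q), (inr (rev_arc q)); split => //.
  - exact: rev_arc_neq.
  - by rewrite qP inE /= l2 orbT.
  exact: dominating_swap_arc_rev.
exists (inr q), (inl (val q).2); split => //; first by rewrite qP inE /= l2 orbT.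
exact: dominating_swap_arc_end.
Qed.

Lemma improving_swap_inl u D : dominating adj D -> inl u \in D ->
  #|nbhd adj (inl u) :\: D| = 1 -> has_swap D.
Proof.
move=> domD uD u1.
have [/exists_inP[[//|q] qD /eqP q1]|/exists_inPn noD] :=
  boolP [exists w in D, adj (inl u) w].
  by apply: (improving_swap_arc domD _ qD); rewrite q1.
have nb_out : nbhd adj (inl u) :\: D = nbhd adj (inl u).
  apply/setP => w; rewrite !inE andbC; case: (boolP (adj (inl u) w)) => //= uw.
  by apply: contraL uw; apply: noD.
have lu : leaf u by rewrite /leaf -nb_out u1.
have /card_gt0P[[v|q]] : 0 < #|nbhd adj (inl u)| by rewrite -nb_out u1.
  by rewrite inE.
rewrite inE => /eqP q1; exists (inl u), (inr q); split => //.
  by rewrite !inE /= q1 lu orbT.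
by rewrite -q1; apply: dominating_swap_leaf; rewrite ?q1.
Qed.

Lemma improving_swap_inr p D : no_component_of_order2 e ->
  dominating adj D -> inr p \in D -> #|nbhd adj (inr p) :\: D| = 1 -> has_swap D.
Proof.
move=> no2 domD pD p1.
have [p1D|p1D] := boolP (inl (val p).1 \in D).
  exact: (improving_swap_arc domD p1D pD).
have revD : inr (rev_arc p) \in D.
  apply: contraT => revD.
  have p1_out : inl (val p).1 \in nbhd adj (inr p) :\: D.
    by rewrite !inE p1D /= eqxx.
  have rev_out : inr (rev_arc p) \in nbhd adj (inr p) :\: D.
    by rewrite !inE revD /= !eqxx.
  by have := card1_eq p1 p1_out rev_out.
case l1: (leaf (val p).1).
  have l2 := leaf_arc_nonleaf no2 l1.
  exists (inr (rev_arc p)), (inl (val p).2); split => //.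
    by rewrite !inE /= l2 orbT.
  by apply: (@dominating_swap_arc_start _ (rev_arc p)); rewrite ?rev_arcK.
exists (inr p), (inl (val p).1); split => //; first by rewrite !inE /= l1 orbT.
exact: dominating_swap_arc_start.
Qed.

Lemma improving_swap_sub2 D x : no_component_of_order2 e ->
  dominating adj D -> x \in D -> #|nbhd adj x :\: D| = 1 -> has_swap D.
Proof.
by case: x => [u|p] no2; [apply: improving_swap_inl | apply: improving_swap_inr].
Qed.

End TwoSubdivision.

Theorem corollary2p14 (T : finType) (e : rel T) :
  simple_graph e -> no_component_of_order2 e ->
  gamma (@sub2_adj T e) = gamma_cer (@sub2_adj T e).
Proof.
move=> [e_sym e_irr] no2; apply: gamma_eq_gamma_cer.
apply: (@certified_dominating_below _ _ (@preferred T e)) => D x.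
exact: improving_swap_sub2.
Qed.
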